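(* The Lie algebra $\Lambda_1(\mathbb{Q}\mathrm{Par}_2)$ is generated by $x_1x_2$, $x_1^2x_2$, $x_1x_2^2$, and $x_1^3x_2+x_1x_2^3$.
   Context: The nonsymmetric operad of partitions $\mathrm{Par}$: $\mathrm{Par}((1))=\{1\}$, and for $m\ge2$, $\mathrm{Par}((m))$ is the set of monomials $\prod_{i=1}^Nx_i^{a_i}$ with $N\ge2$, all $a_i\ge1$, $\sum a_i=m$ (nontrivial order-preserving partitions of $\{1,\dots,m\}$ into consecutive blocks of sizes $a_1,\dots,a_N$). Partial composition: if $a_1+\dots+a_{l-1}+1\le s\le a_1+\dots+a_l$, then $\left(\prod_{i=1}^Nx_i^{a_i}\right)\circ_s\left(\prod_{k=1}^{N_s}x_k^{b_k}\right)=x_l^{a_l-1+\sum_kb_k}\prod_{i\ne l}x_i^{a_i}$; and $1$ is a two-sided unit. $\mathrm{Par}_2$ is the suboperad with $\mathrm{Par}_2((1))=\{1\}$ and $\mathrm{Par}_2((m))$ the monomials in $\mathrm{Par}((m))$ involving only $x_1,x_2$, i.e. $x_1^ax_2^b$ with $a,b\ge1$, $a+b=m$. $\Lambda_1(\mathbb{Q}\mathrm{Par}_2)=\bigoplus_{m\ge2}\mathbb{Q}\mathrm{Par}_2((m))$ with Lie bracket $[c,d]=\sum_{t=1}^{j}d\circ_tc-\sum_{s=1}^{k}c\circ_sd$ for $c\in\mathrm{Par}_2((k))$, $d\in\mathrm{Par}_2((j))$, extended bilinearly. *)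

From mathcomp Require Import all_boot all_algebra.
From mathcomp Require Import mpoly.
Set Implicit Arguments. Unset Strict Implicit. Unset Printing Implicit Defensive.
Import GRing.Theory.
Local Open Scope ring_scope.

(* Elements of Q Par_2 of arity >= 2 are modelled as bivariate polynomials
   over rat: the basis monomial x_1^a x_2^b (a,b >= 1) is 'X_0^+a * 'X_1^+b. *)
Definition x1 : {mpoly rat[2]} := 'X_(@Ordinal 2 0 isT).
Definition x2 : {mpoly rat[2]} := 'X_(@Ordinal 2 1 isT).

Definition par2mon (ab : nat * nat) : {mpoly rat[2]} := x1 ^+ ab.1 * x2 ^+ ab.2.

Definition expo (m : 'X_{1..2}) : nat * nat :=
  (m (@Ordinal 2 0 isT), m (@Ordinal 2 1 isT)).

(* Partial composition in Par_2: (x1^a x2^b) o_s (x1^c x2^d), 1 <= s <= a+b. *)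
Definition comp_par2 (ab : nat * nat) (s : nat) (cd : nat * nat) : nat * nat :=
  if (s <= ab.1)%N then ((ab.1 - 1 + (cd.1 + cd.2))%N, ab.2)
  else (ab.1, (ab.2 - 1 + (cd.1 + cd.2))%N).

Definition arity (ab : nat * nat) : nat := (ab.1 + ab.2)%N.

Definition bracket_mon (c d : nat * nat) : {mpoly rat[2]} :=
  \sum_(1 <= t < (arity d).+1) par2mon (comp_par2 d t c)
  - \sum_(1 <= s < (arity c).+1) par2mon (comp_par2 c s d).

Definition bracket (p q : {mpoly rat[2]}) : {mpoly rat[2]} :=
  \sum_(m <- msupp p) \sum_(n <- msupp q)
     (p@_m * q@_n) *: bracket_mon (expo m) (expo n).

Definition in_Lambda1Par2 (p : {mpoly rat[2]}) : Prop :=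
  forall m, m \in msupp p -> (0 < (expo m).1)%N /\ (0 < (expo m).2)%N.

Inductive lie_gen (S : {mpoly rat[2]} -> Prop) : {mpoly rat[2]} -> Prop :=
  | lie_gen_in p : S p -> lie_gen S p
  | lie_gen_0 : lie_gen S 0
  | lie_gen_add p q : lie_gen S p -> lie_gen S q -> lie_gen S (p + q)
  | lie_gen_scale (c : rat) p : lie_gen S p -> lie_gen S (c *: p)
  | lie_gen_br p q : lie_gen S p -> lie_gen S q -> lie_gen S (bracket p q).

Definition gens6p1 (p : {mpoly rat[2]}) : Prop :=
  p = par2mon (1, 1)%N \/ p = par2mon (2, 1)%N \/ p = par2mon (1, 2)%N \/
  p = par2mon (3, 1)%N + par2mon (1, 3)%N.

(* Write u_a = x_1^a x_2^(N-a), 0 < a < N, for the basis of arity N.  Bracketing with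
   x_1x_2 gives [x_1x_2, x_1^e x_2^f] = e u_(e+1) + f u_e - u_(N-1) - u_1 for e + f = N - 1,
   so by induction on arity, once u_1 and u_(N-1) are generated, u_2, ..., u_(N-2)
   follow one after the other.  The two end monomials are explicit rational combinations
   of such brackets and of the brackets with x_1x_2^2 and x_1^2x_2.  In arity 4 the
   brackets only produce u_2 and u_1 - u_3, and the generator x_1^3x_2 + x_1x_2^3
   supplies u_1 + u_3. *)

From mathcomp Require Import all_boot all_algebra.
From mathcomp Require Import mpoly.
From mathcomp Require Import ring zify.
Set Implicit Arguments. Unset Strict Implicit. Unset Printing Implicit Defensive.
Import GRing.Theory Num.Theory.
Local Open Scope ring_scope.

Section LinearRelations.

Variables (R : numFieldType) (V : comAlgType R) (P : V -> Prop).
Hypothesis P_add : forall x y, P x -> P y -> P (x + y).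
Hypothesis P_scale : forall (c : R) x, P x -> P (c *: x).

Lemma P_sub x y : P x -> P y -> P (x - y).
Proof. by move=> Px Py; rewrite -scaleN1r; apply/P_add/P_scale. Qed.

Lemma P_muln x n : P x -> P (x *+ n).
Proof. by move=> Px; rewrite -scaler_nat; apply: P_scale. Qed.

Lemma P_of_muln x n : (0 < n)%N -> P (x *+ n) -> P x.
Proof.
move=> n_gt0 Pxn; have n_neq0 : n%:R != 0 :> R by rewrite pnatr_eq0 -lt0n.
by rewrite -[x](scalerK n_neq0) scaler_nat; apply: P_scale.
Qed.

Lemma P_eq x y : P x -> x = y -> P y.
Proof. by move=> Px <-. Qed.

(* [u a] plays x_1^a x_2^(n+1-a); [rel11], [rel12], [rel21] are the brackets of x_1x_2,
   x_1x_2^2 and x_1^2x_2 with x_1^e x_2^f landing in arity n+1. *)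
Variables (u : nat -> V) (n : nat).
Hypothesis rel11 : forall e f, (0 < e)%N -> (0 < f)%N -> (e + f = n)%N ->
  P (u e.+1 *+ e + u e *+ f - (u n + u 1)).

Lemma P_all_of_ends : P (u 1) -> P (u n) -> forall a, (0 < a <= n)%N -> P (u a).
Proof.
move=> P1 Pn; elim=> // a IHa /andP[_ a_lt_n].
have [-> // | a_gt0] := posnP a.
have Pa : P (u a) by apply: IHa; rewrite a_gt0 ltnW.
have na_gt0 : (0 < n - a)%N by rewrite subn_gt0.
have rel := rel11 a_gt0 na_gt0 (subnKC (ltnW a_lt_n)).
apply: (P_of_muln a_gt0).
by apply: (P_eq (P_add (P_sub rel (P_muln (n - a) Pa)) (P_add Pn P1))); ring.
Qed.

Lemma P_ends_arity4 : n = 3%N -> P (u n + u 1) -> P (u 1) /\ P (u n).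
Proof.
move=> n3 Pg; subst n.
have r1 := rel11 (e := 1) (f := 2) isT isT erefl.
have r2 := rel11 (e := 2) (f := 1) isT isT erefl.
split; apply: (@P_of_muln _ 4) => //.
  by apply: (P_eq (P_add (P_sub r1 r2) (P_muln 2 Pg))); ring.
by apply: (P_eq (P_add (P_sub r2 r1) (P_muln 2 Pg))); ring.
Qed.

Hypothesis rel12 : forall e f, (0 < e)%N -> (0 < f)%N -> (e + f.+1 = n)%N ->
  P (u e.+2 *+ e + u e *+ f - (u n.-1 + u 1 *+ 2)).
Hypothesis rel21 : forall e f, (0 < e)%N -> (0 < f)%N -> (e + f.+1 = n)%N ->
  P (u e.+2 *+ e + u e *+ f - (u n *+ 2 + u 2)).

Lemma P_ends_arity_ge5 k : n = k.+4 -> P (u 1) /\ P (u n).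
Proof.
move=> nk; subst n.
have x1 := rel11 (e := 1) (f := k.+3) isT isT erefl.
have x2 := rel11 (e := 2) (f := k.+2) isT isT erefl.
have y1 := rel11 (e := k.+3) (f := 1) isT isT (addn1 _).
have y2 := rel11 (e := k.+2) (f := 2) isT isT (addn2 _).
have x12 := rel12 (e := 1) (f := k.+2) isT isT erefl.
have x21 := rel21 (e := 1) (f := k.+2) isT isT erefl.
have y12 := rel12 (e := k.+2) (f := 1) isT isT (addn2 _).
have y21 := rel21 (e := k.+2) (f := 1) isT isT (addn2 _).
rewrite /= in x12 y12.
(* The second combination is the mirror image of the first under x_1 <-> x_2. *)
have c_gt0 : (0 < (k + 5) * (k + 6) * (k + 1))%N by rewrite !muln_gt0 !addn_gt0 orbT.
split; apply: (P_of_muln c_gt0).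
  apply: (P_eq (P_add (P_add (P_add (P_sub (P_muln (k * k + 8 * k + 13) x1)
    (P_muln (k + 5) x2)) (P_muln (k + 7) y1)) (P_muln (k + 7) x12)) (P_muln (k + 3) x21))).
  by ring.
apply: (P_eq (P_add (P_add (P_add (P_sub (P_muln (k * k + 8 * k + 13) y1)
  (P_muln (k + 5) y2)) (P_muln (k + 7) x1)) (P_muln (k + 7) y21)) (P_muln (k + 3) y12))).
by ring.
Qed.

End LinearRelations.

Local Notation i0 := (@Ordinal 2 0 isT).
Local Notation i1 := (@Ordinal 2 1 isT).

Definition mnm_of (ab : nat * nat) : 'X_{1..2} := (U_(i0) *+ ab.1 + U_(i1) *+ ab.2)%MM.

Lemma par2mon_mnm ab : par2mon ab = 'X_[mnm_of ab].
Proof. by rewrite /par2mon /mnm_of mpolyXD -!mpolyXn. Qed.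

Lemma expo_mnm_of ab : expo (mnm_of ab) = ab.
Proof. by case: ab => a b; rewrite /expo !mnmDE !mulmnE !mnm1E /= !mul1n !mul0n addn0. Qed.

Lemma mnm_of_expo m : mnm_of (expo m) = m.
Proof.
apply/mnmP => -[[|[|i]] lti] //;
  by rewrite mnmDE !mulmnE !mnm1E /= (bool_irrelevance lti isT) ?mul1n ?mul0n ?addn0.
Qed.

Lemma par2mon_expo m : par2mon (expo m) = 'X_[m].
Proof. by rewrite par2mon_mnm mnm_of_expo. Qed.

Lemma bracket_par2mon c d : bracket (par2mon c) (par2mon d) = bracket_mon c d.
Proof.
by rewrite /bracket !par2mon_mnm !msuppX !big_seq1 !mcoeffX !eqxx mul1r scale1r !expo_mnm_of.
Qed.

Lemma sum_comp_par2 ab cd :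
  \sum_(1 <= t < (arity ab).+1) par2mon (comp_par2 ab t cd) =
  par2mon ((ab.1 - 1 + arity cd)%N, ab.2) *+ ab.1
  + par2mon (ab.1, (ab.2 - 1 + arity cd)%N) *+ ab.2.
Proof.
case: ab => a b; rewrite /arity /= (big_cat_nat _ (n := a.+1)) ?ltnS ?leq_addr //=.
congr (_ + _).
  rewrite (eq_big_nat _ _ (F2 := fun=> par2mon ((a - 1 + (cd.1 + cd.2))%N, b))).
    by rewrite sumr_const_nat subSS subn0.
  by move=> t /andP[_ t_le]; rewrite /comp_par2 /= -ltnS t_le.
rewrite (eq_big_nat _ _ (F2 := fun=> par2mon (a, (b - 1 + (cd.1 + cd.2))%N))).
  by rewrite sumr_const_nat subSS addKn.
by move=> t /andP[t_gt _]; rewrite /comp_par2 /= leqNgt t_gt.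
Qed.

Lemma bracket_monE c d : bracket_mon c d =
  par2mon ((d.1 - 1 + arity c)%N, d.2) *+ d.1 + par2mon (d.1, (d.2 - 1 + arity c)%N) *+ d.2
  - (par2mon ((c.1 - 1 + arity d)%N, c.2) *+ c.1
     + par2mon (c.1, (c.2 - 1 + arity d)%N) *+ c.2).
Proof. by rewrite /bracket_mon !sum_comp_par2. Qed.

(* Only meaningful for [a <= N]: the subtraction is truncated. *)
Definition mon_of_arity (N a : nat) : {mpoly rat[2]} := par2mon (a, (N - a)%N).

Lemma par2mon_arity a b : par2mon (a, b) = mon_of_arity (a + b)%N a.
Proof. by rewrite /mon_of_arity addKn. Qed.

Local Notation u n := (mon_of_arity n.+1).

Lemma bracket11_arity e f n : (0 < e)%N -> (0 < f)%N -> (e + f = n)%N ->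
  bracket_mon (1, 1) (e, f) = u n e.+1 *+ e + u n e *+ f - (u n n + u n 1).
Proof.
move=> e_gt0 f_gt0 efn; rewrite bracket_monE /mon_of_arity /arity /= !mulr1n.
by congr (_ + _ - (_ + _)); try congr (_ *+ _); congr (par2mon (_, _)); lia.
Qed.

Lemma bracket12_arity e f n : (0 < e)%N -> (0 < f)%N -> (e + f.+1 = n)%N ->
  bracket_mon (1, 2) (e, f) = u n e.+2 *+ e + u n e *+ f - (u n n.-1 + u n 1 *+ 2).
Proof.
move=> e_gt0 f_gt0 efn; rewrite bracket_monE /mon_of_arity /arity /= !mulr1n.
by congr (_ + _ - (_ + _)); try congr (_ *+ _); congr (par2mon (_, _)); lia.
Qed.

Lemma bracket21_arity e f n : (0 < e)%N -> (0 < f)%N -> (e + f.+1 = n)%N ->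
  bracket_mon (2, 1) (e, f) = u n e.+2 *+ e + u n e *+ f - (u n n *+ 2 + u n 2).
Proof.
move=> e_gt0 f_gt0 efn; rewrite bracket_monE /mon_of_arity /arity /= !mulr1n.
by congr (_ + _ - (_ + _)); try congr (_ *+ _); congr (par2mon (_, _)); lia.
Qed.

Local Notation gen := (lie_gen gens6p1).

Lemma gen_bracket_par2mon c d : gen (par2mon c) -> gen (par2mon d) -> gen (bracket_mon c d).
Proof. by move=> gc gd; rewrite -bracket_par2mon; apply: lie_gen_br. Qed.

Section AritySuccessor.

Variable n : nat.
Hypothesis n_ge3 : (3 <= n)%N.
Hypothesis gen_below : forall e f, (0 < e)%N -> (0 < f)%N -> (e + f <= n)%N ->
  gen (par2mon (e, f)).

Lemma gen_rel11 e f : (0 < e)%N -> (0 < f)%N -> (e + f = n)%N ->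
  gen (u n e.+1 *+ e + u n e *+ f - (u n n + u n 1)).
Proof.
move=> e_gt0 f_gt0 efn; rewrite -bracket11_arity //.
apply: gen_bracket_par2mon; first by apply: lie_gen_in; left.
by apply: gen_below; lia.
Qed.

Lemma gen_rel12 e f : (0 < e)%N -> (0 < f)%N -> (e + f.+1 = n)%N ->
  gen (u n e.+2 *+ e + u n e *+ f - (u n n.-1 + u n 1 *+ 2)).
Proof.
move=> e_gt0 f_gt0 efn; rewrite -bracket12_arity //.
apply: gen_bracket_par2mon; first by apply: lie_gen_in; right; right; left.
by apply: gen_below; lia.
Qed.

Lemma gen_rel21 e f : (0 < e)%N -> (0 < f)%N -> (e + f.+1 = n)%N ->
  gen (u n e.+2 *+ e + u n e *+ f - (u n n *+ 2 + u n 2)).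
Proof.
move=> e_gt0 f_gt0 efn; rewrite -bracket21_arity //.
apply: gen_bracket_par2mon; first by apply: lie_gen_in; right; left.
by apply: gen_below; lia.
Qed.

Lemma gen_ends : gen (u n 1) /\ gen (u n n).
Proof.
have [n3 | [k nk]] : n = 3%N \/ exists k, n = k.+4.
  by case: n n_ge3 => [|[|[|[|k]]]] // _; [left | right; exists k].
  apply: (P_ends_arity4 (@lie_gen_add _) (@lie_gen_scale _) gen_rel11 n3).
  by rewrite n3; apply: lie_gen_in; right; right; right.
exact: (P_ends_arity_ge5 (@lie_gen_add _) (@lie_gen_scale _) gen_rel11 gen_rel12 gen_rel21 nk).
Qed.

Lemma gen_arity_succ a : (0 < a <= n)%N -> gen (u n a).
Proof.
have [gen1 genn] := gen_ends.
exact: (P_all_of_ends (@lie_gen_add _) (@lie_gen_scale _) gen_rel11).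
Qed.

End AritySuccessor.

Lemma gen_mon_of_arity N a : (0 < a < N)%N -> gen (mon_of_arity N a).
Proof.
elim/ltn_ind: N a => N IH a /andP[a_gt0 a_lt_N].
have [N_lt4 | N_ge4] := ltnP N 4.
  apply: lie_gen_in; rewrite /gens6p1 /mon_of_arity.
  by case: N a a_gt0 a_lt_N N_lt4 {IH} => [|[|[|[|N]]]] [|[|[|a]]] //= *; auto.
case: N N_ge4 IH a_lt_N => // n n_ge3 IH a_le_n.
apply: (gen_arity_succ n_ge3); last by rewrite a_gt0.
by move=> e f e_gt0 f_gt0 ef_le; rewrite par2mon_arity; apply: IH; lia.
Qed.

Lemma gen_par2mon ab : (0 < ab.1)%N -> (0 < ab.2)%N -> gen (par2mon ab).
Proof.
case: ab => a b /= a_gt0 b_gt0; rewrite par2mon_arity.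
by apply: gen_mon_of_arity; rewrite a_gt0 -addn1 leq_add2l.
Qed.

Theorem theorem6p1 :
  forall p : {mpoly rat[2]}, in_Lambda1Par2 p -> lie_gen gens6p1 p.
Proof.
move=> p p_in; rewrite (mpolyE p) big_seq.
apply: (big_ind gen); [exact: lie_gen_0 | exact: lie_gen_add |].
move=> m /p_in[m1_gt0 m2_gt0]; apply: lie_gen_scale.
by rewrite -par2mon_expo; apply: gen_par2mon.
Qed.
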